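(* Let $\mathcal{F}$ be a finite field and let $\mathcal{S}$ be a stabilizer code with parameters $[[n,k]]_{\mathcal{F}}$ (local-dimension given by $\mathcal{F}$) having $r$ linearly independent generators in the $\phi$ representation. Then there is a prescriptive (constructive) method to transform $\mathcal{S}$ into a local-dimension-invariant form, and this form yields a stabilizer code with parameters $[[n,n-r]]_{\mathcal{R}}$ for any choice of a finite commutative ring $\mathcal{R}$ as local-dimension.
   Context: An $n$-register generalized Pauli operator is a tensor product $\bigotimes_{t=1}^n X^{a_t}Z^{b_t}$ of powers of the shift operator $X$ and phase operator $Z$ of the local-dimension. Its $\phi$ representation is the vector $(a_1,\dots,a_n\,|\,b_1,\dots,b_n)$ of exponents; composition of Paulis corresponds to addition of these vectors, and $\phi_\infty$ denotes this representation with entries regarded as integers (no modular reduction). The symplectic product of $(\vec a\,|\,\vec b)$ and $(\vec a'\,|\,\vec b')$ is $\vec a\cdot\vec b'-\vec a'\cdot\vec b$; two Paulis commute over local-dimension $q$ iff their symplectic product is $0$ modulo $q$. A stabilizer code is specified by commuting generators on $n$ physical registers; $[[n,k]]$ means $n$ physical registers and $k$ logical (encoded) registers. A stabilizer code is called local-dimension-invariant (LDI) if $\phi_\infty(s_i)\odot\phi_\infty(s_j)=0$ exactly over the integers for all generators $s_i,s_j$, so the generators commute regardless of the local-dimension; an LDI form of $\mathcal{S}$ is such a set of generators that agrees with $\mathcal{S}$ over its original local-dimension. *)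

From HB Require Import structures.
From mathcomp Require Import all_boot all_order all_algebra.
Set Implicit Arguments. Unset Strict Implicit. Unset Printing Implicit Defensive.
Import Order.TTheory GRing.Theory Num.Theory.
Local Open Scope ring_scope.

(* phi representation of an n-register Pauli: a row vector (a_1..a_n | b_1..b_n)
   of length n + n; coordinates lshift n t = a_t (X exponent), rshift n t = b_t. *)

Definition symp (R : comPzRingType) (n : nat) (u v : 'rV[R]_(n + n)) : R :=
  \sum_(t < n) (u 0 (lshift n t) * v 0 (rshift n t)
                - v 0 (lshift n t) * u 0 (rshift n t)).

Definition reduce (R : pzRingType) (r m : nat) (M : 'M[int]_(r, m)) : 'M[R]_(r, m) :=
  map_mx (fun z : int => z%:~R) M.

(* G (rows = r generators in phi representation over R) is a stabilizer code with
   parameters [[n,k]]_R: generators pairwise commute, they are independent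
   (the stabilizer group they generate is a free R-module of rank r, i.e. has
   |R|^r elements), and k = n - r logical registers are encoded. *)
Arguments symp {R n}.
Definition stab_code (R : comPzRingType) (n k r : nat) (G : 'M[R]_(r, n + n)) : Prop :=
  [/\ forall i j : 'I_r, symp (row i G) (row j G) = 0,
      forall v : 'rV[R]_r, v *m G = 0 -> v = 0
    & k = (n - r)%N].

Definition LDI (n r : nat) (M : 'M[int]_(r, n + n)) : Prop :=
  forall i j : 'I_r, symp (row i M) (row j M) = 0.
Arguments stab_code {R} n k {r} G.
Arguments reduce {R r m} M.
Arguments LDI {n r} M.

From mathcomp Require Import all_boot all_algebra finfield.
Import GRing.Theory.
Local Open Scope ring_scope.

(* Over the field, Fourier gates (a, b) |-> (b, -a) on a suitable set h of
   registers give the X-block of the generators full row rank: if v kills the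
   X-block, then v B <> 0 yields a register t where v has Z-content, and by
   isotropy toggling t strictly shrinks the kernel.  Multiplying by an integer
   lift of the inverse of an invertible r x r minor of the X-block (adj times
   a power of det, as 1/d = d^(q-2) in F_q) and then correcting that minor to
   be exactly the identity over Z, the Gram matrix X Z^T - Z X^T becomes an
   alternating integer matrix vanishing in F, and subtracting U^T P from Z
   (U its strict upper triangle, P the column selection) kills it over Z.
   The identity minor is a right inverse, so the generators stay independent
   over every ring. *)

Section PauliBlocks.
Context {R : pzRingType} {n : nat} (h : {set 'I_n}).

(* The X- and Z-blocks of generators after a Fourier gate on each register of h. *)
Definition xpart {m} (B : 'M[R]_(m, n + n)) : 'M[R]_(m, n) :=
  \matrix_(i, t) if t \in h then B i (rshift n t) else B i (lshift n t).

Definition zpart {m} (B : 'M[R]_(m, n + n)) : 'M[R]_(m, n) :=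
  \matrix_(i, t) if t \in h then - B i (lshift n t) else B i (rshift n t).

Definition xzmx {m} (X Z : 'M[R]_(m, n)) : 'M[R]_(m, n + n) :=
  row_mx (\matrix_(i, t) if t \in h then - Z i t else X i t)
         (\matrix_(i, t) if t \in h then X i t else Z i t).

Lemma xzmxK {m} (B : 'M[R]_(m, n + n)) : xzmx (xpart B) (zpart B) = B.
Proof.
apply/matrixP => i c; case: (split_ordP c) => t ->;
  by rewrite ?row_mxEl ?row_mxEr !mxE; case: (t \in h); rewrite ?opprK.
Qed.

Lemma xzmx0 {m} : xzmx 0 0 = 0 :> 'M[R]_(m, n + n).
Proof.
by rewrite /xzmx -row_mx0; congr row_mx; apply/matrixP => i t; rewrite !mxE; case: (t \in h);
  rewrite ?oppr0.
Qed.

Lemma xpart_mul {m p} (A : 'M[R]_(p, m)) (B : 'M[R]_(m, n + n)) :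
  xpart (A *m B) = A *m xpart B.
Proof.
by apply/matrixP => i t; rewrite !mxE; case: ifP => ht; apply: eq_bigr => k _; rewrite !mxE ht.
Qed.

Lemma zpart_mul {m p} (A : 'M[R]_(p, m)) (B : 'M[R]_(m, n + n)) :
  zpart (A *m B) = A *m zpart B.
Proof.
apply/matrixP => i t; rewrite !mxE; case: ifP => ht; last first.
  by apply: eq_bigr => k _; rewrite !mxE ht.
by rewrite -sumrN; apply: eq_bigr => k _; rewrite !mxE ht mulrN.
Qed.

Lemma mul_xzmx_tr {m p} (X Z : 'M[R]_(m, n)) (Y W : 'M[R]_(p, n)) :
  xzmx X Z *m (xzmx Y W)^T = X *m Y^T + Z *m W^T.
Proof.
rewrite tr_row_mx mul_row_col; apply/matrixP => i j; rewrite !mxE -!big_split /=.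
by apply: eq_bigr => t _; rewrite !mxE; case: (t \in h); rewrite ?mulrNN // addrC.
Qed.

End PauliBlocks.

Definition toggle {n} (h : {set 'I_n}) (t : 'I_n) : {set 'I_n} :=
  [set s | (s \in h) != (s == t)].

Lemma xpart_toggle {R : pzRingType} {n m} (h : {set 'I_n}) t (B : 'M[R]_(m, n + n)) i s :
  xpart (toggle h t) B i s =
  if s == t then (if t \in h then - zpart h B i t else zpart h B i t) else xpart h B i s.
Proof.
rewrite !mxE inE; have [->|_] := eqVneq s t; last by case: (s \in h).
by case: (t \in h); rewrite ?opprK.
Qed.

Section MapPauliBlocks.
Context {R S : pzRingType} (f : {additive R -> S}) {n m : nat} (h : {set 'I_n}).

Lemma map_xpart (B : 'M[R]_(m, n + n)) : map_mx f (xpart h B) = xpart h (map_mx f B).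
Proof. by apply/matrixP => i t; rewrite !mxE; case: (t \in h); rewrite ?mxE. Qed.

Lemma map_zpart (B : 'M[R]_(m, n + n)) : map_mx f (zpart h B) = zpart h (map_mx f B).
Proof. by apply/matrixP => i t; rewrite !mxE; case: (t \in h); rewrite ?mxE ?raddfN. Qed.

Lemma map_xzmx (X Z : 'M[R]_(m, n)) : map_mx f (xzmx h X Z) = xzmx h (map_mx f X) (map_mx f Z).
Proof.
rewrite map_row_mx; congr row_mx; apply/matrixP => i t; rewrite !mxE;
  by case: (t \in h); rewrite ?raddfN.
Qed.

End MapPauliBlocks.

Definition symp_gram {R : comPzRingType} {r n} (X Z : 'M[R]_(r, n)) : 'M[R]_r :=
  X *m Z^T - Z *m X^T.

Definition isotropic {R : comPzRingType} {n r} (G : 'M[R]_(r, n + n)) : Prop :=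
  forall i j, symp (row i G) (row j G) = 0.

Section Isotropy.
Context {R : comPzRingType} {n : nat}.

Lemma symp_row_xzmx (h : {set 'I_n}) {r p} (X Z : 'M[R]_(r, n)) (Y W : 'M[R]_(p, n)) i j :
  symp (row i (xzmx h X Z)) (row j (xzmx h Y W)) = (X *m W^T - Z *m Y^T) i j.
Proof.
rewrite /symp ![in RHS]mxE -sumrB; apply: eq_bigr => t _.
rewrite ![row _ _ _ _]mxE !row_mxEl !row_mxEr !mxE.
by case: (t \in h); rewrite ?mulNr ?mulrN ?opprK; [rewrite addrC mulrC | rewrite [Y _ _ * _]mulrC].
Qed.

Lemma isotropic_xzmx (h : {set 'I_n}) {r} (X Z : 'M[R]_(r, n)) :
  isotropic (xzmx h X Z) <-> symp_gram X Z = 0.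
Proof.
split=> [iso | G0 i j]; last by rewrite symp_row_xzmx -/(symp_gram X Z) G0 mxE.
by apply/matrixP => i j; rewrite -(symp_row_xzmx h) iso mxE.
Qed.

Lemma isotropic_gram (h : {set 'I_n}) {r} {G : 'M[R]_(r, n + n)} :
  isotropic G -> symp_gram (xpart h G) (zpart h G) = 0.
Proof. by move=> iso; apply/(isotropic_xzmx h); rewrite xzmxK. Qed.

Lemma isotropic_mulmx {m r} (A : 'M[R]_(m, r)) (G : 'M[R]_(r, n + n)) :
  isotropic G -> isotropic (A *m G).
Proof.
move=> /(isotropic_gram set0) G0.
rewrite -(xzmxK set0 (A *m G)); apply/isotropic_xzmx; rewrite xpart_mul zpart_mul /symp_gram.
by rewrite !trmx_mul !mulmxA -!(mulmxA A) -mulmxBr -mulmxBl -/(symp_gram _ _) G0 mul0mx mulmx0.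
Qed.

Lemma symp_gram_tr {r} (X Z : 'M[R]_(r, n)) : (symp_gram X Z)^T = - symp_gram X Z.
Proof. by rewrite /symp_gram linearB /= !trmx_mul !trmxK opprB. Qed.

Lemma symp_gram_diag {r} (X Z : 'M[R]_(r, n)) i : symp_gram X Z i i = 0.
Proof.
rewrite !mxE -sumrB big1 // => t _; rewrite !mxE [Z i t * _]mulrC subrr //.
Qed.

End Isotropy.

Lemma symp_map {R S : comPzRingType} (f : {rmorphism R -> S}) {n} (u v : 'rV[R]_(n + n)) :
  symp (map_mx f u) (map_mx f v) = f (symp u v).
Proof. by rewrite /symp rmorph_sum; apply: eq_bigr => t _; rewrite !mxE rmorphB !rmorphM. Qed.

Lemma isotropic_map {R S : comPzRingType} (f : {rmorphism R -> S}) {n r}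
    (G : 'M[R]_(r, n + n)) :
  isotropic G -> isotropic (map_mx f G).
Proof. by move=> iso i j; rewrite -!map_row symp_map iso rmorph0. Qed.

Lemma map_symp_gram {R S : comPzRingType} (f : {rmorphism R -> S}) {r n} (X Z : 'M[R]_(r, n)) :
  map_mx f (symp_gram X Z) = symp_gram (map_mx f X) (map_mx f Z).
Proof. by rewrite map_mxB !map_mxM -!map_trmx. Qed.

Section Lagrangian.
Context {F : fieldType} {n r : nat} {B : 'M[F]_(r, n + n)}.
Hypotheses (B_isotropic : isotropic B) (B_free : row_free B).

Lemma ker_xpart_orthogonal h (v w : 'rV[F]_r) :
  v *m xpart h B = 0 -> w *m xpart h B *m (v *m zpart h B)^T = 0.
Proof.
move=> vX0; have /eqP := isotropic_gram h B_isotropic; rewrite subr_eq0 => /eqP XZ.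
by rewrite trmx_mul -mulmxA (mulmxA (xpart h B)) XZ -!mulmxA -trmx_mul vX0 trmx0 !mulmx0.
Qed.

Lemma ker_xpart_toggle {h t} {v : 'rV[F]_r} :
  v *m xpart h B = 0 -> (v *m zpart h B) 0 t != 0 ->
  (kermx (xpart (toggle h t) B) < kermx (xpart h B))%MS.
Proof.
move=> vX0 vZt.
have toggleE (w : 'rV_r) s : (w *m xpart (toggle h t) B) 0 s =
    if s == t then (if t \in h then - (w *m zpart h B) 0 t else (w *m zpart h B) 0 t)
    else (w *m xpart h B) 0 s.
  by rewrite -!xpart_mul -zpart_mul xpart_toggle.
rewrite ltmxE; apply/andP; split.
  apply/rV_subP => w; rewrite !sub_kermx => /eqP wX'0.
  have ws0 s : s != t -> (w *m xpart h B) 0 s = 0.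
    by move=> ne; move/rowP/(_ s): wX'0; rewrite toggleE (negbTE ne) => ->; rewrite mxE.
  have wt0 : (w *m xpart h B) 0 t = 0.
    (* of the sum over s of (w X)_s (v Z)_s = 0, only the term s = t survives *)
    move/matrixP/(_ 0 0): (ker_xpart_orthogonal h v w vX0).
    rewrite [X in X = _ -> _]mxE [X in _ = X -> _]mxE (bigD1 t) //= big1 ?addr0 => [|s ne].
      by rewrite [(_^T) _ _]mxE => /eqP; rewrite mulf_eq0 (negbTE vZt) orbF => /eqP.
    by rewrite ws0 ?mul0r.
  by apply/eqP/rowP => s; rewrite [RHS]mxE; have [->|ne] := eqVneq s t; [exact: wt0 | exact: ws0].
have vK : (v <= kermx (xpart h B))%MS by rewrite sub_kermx vX0.
apply/negP => /(submx_trans vK); rewrite sub_kermx => /eqP/rowP/(_ t).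
by rewrite toggleE eqxx [RHS]mxE; case: (t \in h) => /eqP; rewrite ?oppr_eq0 (negbTE vZt).
Qed.

Lemma exists_row_free_xpart : exists h : {set 'I_n}, row_free (xpart h B).
Proof.
have [h _ hmin] := @arg_minnP _ set0 xpredT (fun h => \rank (kermx (xpart h B))) isT.
exists h; rewrite -kermx_eq0; apply: contraT => /rowV0Pn[v]; rewrite sub_kermx => /eqP vX0 nz_v.
have /existsP[t vZt] : [exists t, (v *m zpart h B) 0 t != 0].
  apply: contraNT nz_v => /existsPn vZ0; apply/eqP/(row_free_inj B_free); rewrite mul0mx.
  have vZ : v *m zpart h B = 0 by apply/rowP => t; rewrite [RHS]mxE; apply/eqP/negPn; exact: vZ0.
  by rewrite -(xzmxK h (v *m B)) xpart_mul zpart_mul vX0 vZ xzmx0.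
by have := hmin (toggle h t) isT; rewrite leqNgt (rank_ltmx (ker_xpart_toggle vX0 vZt)).
Qed.

End Lagrangian.

Lemma row_free_colsub_unit {F : fieldType} {m n} {X : 'M[F]_(m, n)} :
  row_free X -> exists2 f : 'I_m -> 'I_n, injective f & colsub f X \in unitmx.
Proof.
move=> Xfree; have XTfull : row_full X^T by rewrite /row_full mxrank_tr.
exists (fullrankfun XTfull); first exact: fullrankfun_inj.
rewrite -unitmx_tr (_ : _^T = rowsub (fullrankfun XTfull) X^T) ?fullrowsub_unit //.
by apply/matrixP => i j; rewrite !mxE.
Qed.

Lemma mulmx_tr_rowsub1 {R : pzRingType} {m n p} (f : 'I_m -> 'I_n) (A : 'M[R]_(p, n)) :
  A *m (rowsub f 1%:M)^T = colsub f A.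
Proof.
apply/matrixP => i k; rewrite !mxE (bigD1 (f k)) //= big1 => [|t ne].
  by rewrite !mxE eqxx mulr1 addr0.
by rewrite !mxE eq_sym (negbTE ne) mulr0.
Qed.

Lemma colsub_rowsub1 {R : pzRingType} {m n} (f : 'I_m -> 'I_n) :
  injective f -> colsub f (rowsub f 1%:M) = 1%:M :> 'M[R]_m.
Proof. by move=> f_inj; apply/matrixP => i j; rewrite !mxE (inj_eq f_inj). Qed.

Lemma invf_card {F : finFieldType} (x : F) : x != 0 -> x^-1 = x ^+ #|F|.-2.
Proof.
move=> x0; have F_gt1 : (1 < #|F|)%N by apply/card_gt1P; exists 0, 1; rewrite !inE eq_sym oner_neq0.
apply: (mulIf x0); rewrite mulVf //; apply: (mulIf x0); rewrite mul1r -!exprSr.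
have -> : #|F|.-2.+2 = #|F| by case: #|F| F_gt1 => [|[]].
by rewrite expf_card.
Qed.

Lemma reduceE {R : pzRingType} {r m} (M : 'M[int]_(r, m)) : reduce (R:=R) M = map_mx intr M.
Proof. by []. Qed.

Lemma reduce_invmx_lift {F : finFieldType} {m} (D : 'M[int]_m) :
  reduce (R:=F) D \in unitmx -> exists D' : 'M[int]_m, reduce D' = invmx (reduce (R:=F) D).
Proof.
rewrite !reduceE => Du; exists ((\det D) ^+ #|F|.-2 *: \adj D).
rewrite reduceE /invmx Du map_mxZ map_mx_adj rmorphXn -det_map_mx invf_card //.
by rewrite -unitfE -unitmxE.
Qed.

Definition upper_part {R : pzRingType} {r} (G : 'M[R]_r) : 'M[R]_r :=
  \matrix_(i, j) if (i < j)%N then G i j else 0.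

Lemma map_upper_part {R S : pzRingType} (f : {additive R -> S}) {r} (G : 'M[R]_r) :
  map_mx f (upper_part G) = upper_part (map_mx f G).
Proof. by apply/matrixP => i j; rewrite !mxE; case: ifP; rewrite ?raddf0. Qed.

Lemma upper_part0 {R : pzRingType} {r} : upper_part (0 : 'M[R]_r) = 0.
Proof. by apply/matrixP => i j; rewrite !mxE; case: ifP. Qed.

Lemma symp_gram_correction {R : comPzRingType} {r n} (X Z P : 'M[R]_(r, n)) :
  X *m P^T = 1%:M -> symp_gram X (Z - (upper_part (symp_gram X Z))^T *m P) = 0.
Proof.
move=> XP; have PX : P *m X^T = 1%:M by rewrite -[P]trmxK -trmx_mul XP trmx1.
set G := symp_gram X Z; set U := upper_part G.
have -> : symp_gram X (Z - U^T *m P) = G - U + U^T.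
  rewrite /symp_gram linearB /= trmx_mul trmxK mulmxBr mulmxBl mulmxA XP mul1mx.
  by rewrite -mulmxA PX mulmx1 opprB addrA addrAC (addrAC (X *m Z^T)).
have G_tr : G^T = - G := symp_gram_tr X Z.
have G_diag i : G i i = 0 := symp_gram_diag X Z i.
clearbody G; apply/matrixP => i j; rewrite !mxE; case: ltngtP => [_|_|/val_inj->].
- by rewrite subrr addr0.
- by move/matrixP/(_ j i): G_tr; rewrite !mxE => ->; rewrite subr0 addNr.
- by rewrite G_diag !subr0 addr0.
Qed.

Lemma ldi_lift {R : comPzRingType} {n r} (h : {set 'I_n}) {f : 'I_r -> 'I_n}
    {L : 'M[int]_(r, n + n)} :
  injective f -> isotropic (reduce (R:=R) L) -> reduce (R:=R) (colsub f (xpart h L)) = 1%:M ->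
  exists M : 'M[int]_(r, n + n),
    [/\ LDI M, reduce (R:=R) M = reduce L & exists Q, M *m Q = 1%:M].
Proof.
rewrite !reduceE => f_inj L_isotropic L_sel.
set P : 'M[int]_(r, n) := rowsub f 1%:M.
set X := xpart h L - (colsub f (xpart h L) - 1%:M) *m P.
set Z := zpart h L - (upper_part (symp_gram X (zpart h L)))^T *m P.
have XP : X *m P^T = 1%:M.
  by rewrite mulmxBl -mulmxA !mulmx_tr_rowsub1 colsub_rowsub1 // mulmx1 opprB addrC subrK.
have reduceX : map_mx intr X = map_mx intr (xpart h L) :> 'M[R]_(r, n).
  by rewrite /X map_mxB map_mxM map_mxB /= L_sel map_mx1 subrr mul0mx subr0.
have reduceG : map_mx intr (symp_gram X (zpart h L)) = 0 :> 'M[R]_r.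
  by rewrite map_symp_gram reduceX map_xpart map_zpart isotropic_gram.
have reduceZ : map_mx intr Z = map_mx intr (zpart h L) :> 'M[R]_(r, n).
  by rewrite /Z map_mxB map_mxM -map_trmx map_upper_part reduceG upper_part0 trmx0 mul0mx subr0.
exists (xzmx h X Z); split.
- exact/isotropic_xzmx/symp_gram_correction.
- by rewrite reduceE map_xzmx /= reduceX reduceZ map_xpart map_zpart xzmxK.
- by exists (xzmx h P 0)^T; rewrite mul_xzmx_tr XP trmx0 mulmx0 addr0.
Qed.

Lemma ldi_stab_code {n r} {M : 'M[int]_(r, n + n)} {Q : 'M[int]_(n + n, r)} :
  LDI M -> M *m Q = 1%:M -> forall R : comPzRingType, stab_code n (n - r) (reduce (R:=R) M).
Proof.
move=> M_isotropic MQ R; rewrite reduceE; split=> //; first exact: isotropic_map.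
by move=> v vM0; rewrite -[v]mulmx1 -(map_mx1 intr) -MQ map_mxM mulmxA /= vM0 mul0mx.
Qed.

Theorem theorem3 (F : finFieldType) (n k r : nat) (S : 'M[int]_(r, n + n)) :
  stab_code n k (reduce (R:=F) S) ->
  exists M : 'M[int]_(r, n + n),
    [/\ LDI M,
        (reduce (R:=F) M == reduce (R:=F) S)%MS
      & forall R : finComNzRingType, stab_code n (n - r) (reduce (R:=R) M)].
Proof.
case=> B_isotropic B_inj _; set B := reduce S.
have [h X_free] := exists_row_free_xpart B_isotropic (inj_row_free B_inj).
have [f f_inj D_unit] := row_free_colsub_unit X_free.
have reduceD : reduce (colsub f (xpart h S)) = colsub f (xpart h B).
  by rewrite !reduceE map_mxsub map_xpart.
have [D' reduceD'] : exists D' : 'M[int]_r, reduce D' = invmx (colsub f (xpart h B)).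
  by rewrite -reduceD; apply: reduce_invmx_lift; rewrite reduceD.
have reduceL : reduce (D' *m S) = invmx (colsub f (xpart h B)) *m B.
  by rewrite reduceE map_mxM /= -reduceE reduceD'.
have L_isotropic : isotropic (reduce (R:=F) (D' *m S)).
  by rewrite reduceL; apply: isotropic_mulmx.
have L_sel : reduce (R:=F) (colsub f (xpart h (D' *m S))) = 1%:M.
  by rewrite reduceE map_mxsub map_xpart /= -reduceE reduceL xpart_mul -mulmx_colsub mulVmx.
have [M [M_ldi reduceM [Q MQ]]] := ldi_lift h f_inj L_isotropic L_sel.
exists M; split=> //; last by move=> R; exact: ldi_stab_code M_ldi MQ R.
rewrite reduceM reduceL; apply/eqmxP/eqmxMfull.
by rewrite row_full_unit unitmx_inv.
Qed.
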